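(* Let $V$ be a finite-dimensional vector space with a direct sum decomposition $V=V(1)\oplus\cdots\oplus V(l)$ and a flag of subspaces $V=\mathcal F^0V\supseteq\mathcal F^1V\supseteq\cdots\supseteq\mathcal F^mV=\{0\}$, $l,m\ge1$. Let $n=\dim V$ and for $1\le i\le n$ let $f(i)=\max\{k\ge0: i\le\dim\mathcal F^kV\}$. Then there exist bases $(x_i)_{1\le i\le n}$ and $(b_i)_{1\le i\le n}$ of $V$ and an upper triangular matrix $S=(s_{ij})\in k^{n\times n}$ with all diagonal entries $1$ such that: (1) for each $i$ there is $1\le g(i)\le l$ with $x_i\in V(g(i))$; (2) for each $0\le k\le m-1$, the vectors $b_i$ with $1\le i\le\dim\mathcal F^kV$ form a basis of $\mathcal F^kV$; (3) for all $1\le i\le n$, $b_i=x_i+\sum_{j>i}s_{ij}x_j=x_i+\sum_{j:\,f(j)<f(i),\,g(j)\ne g(i)}s_{ij}x_j$.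
   Context: $k$ denotes the ground field. *)

From HB Require Import structures.
From mathcomp Require Import all_boot all_order all_algebra.
Set Implicit Arguments. Unset Strict Implicit. Unset Printing Implicit Defensive.
Import GRing.Theory.
Local Open Scope ring_scope.

(* f(i) = max { k : i <= dim F^k V }, the maximum taken over 0 <= k <= m
   (the flag is only given for 0 <= k <= m). Here i is 1-based (a nat). *)
Definition flag_level (K : fieldType) (V : vectType K)
  (F : nat -> {vspace V}) (m i : nat) : nat :=
  \max_(k < m.+1 | (i <= \dim (F k))%N) (k : nat).

From HB Require Import structures.
From mathcomp Require Import all_boot all_order all_algebra.
From mathcomp Require Import zify.
Set Implicit Arguments. Unset Strict Implicit. Unset Printing Implicit Defensive.
Import GRing.Theory.
Local Open Scope ring_scope.

(* The x-vectors are built level by level, going down the flag.  After stage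
   k we hold a list of items (x, b, g, lev), see [adapted]: the x-vectors, with
   x in V(g), span a complement of F k; b lies in F lev, and b - x is a
   combination of x-vectors of lower level taken in other components.  At
   stage k the new x-vectors of V(g) are chosen, by a greedy basis extension
   ([extend_by_sublist]), among the vectors of V(g) congruent to a vector of
   F k modulo the x-vectors of the other components; the new b is that vector
   of F k ([adapted_step]). *)

Lemma flag_antitone (K : fieldType) (V : vectType K) (F : nat -> {vspace V})
    (m : nat) :
  (forall k, (k < m)%N -> (F k.+1 <= F k)%VS) ->
  forall k k', (k <= k')%N -> (k' <= m)%N -> (F k' <= F k)%VS.
Proof.
move=> HF k; elim=> [|k' IH]; first by rewrite leqn0 => /eqP->.
rewrite leq_eqVlt => /orP[/eqP->//|kk'] k'm.
exact: subv_trans (HF k' k'm) (IH kk' (ltnW k'm)).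
Qed.

Lemma dim_add_line (K : fieldType) (V : vectType K) (A : {vspace V}) (y : V) :
  y \notin A -> \dim (A + <[y]>) = (\dim A).+1.
Proof.
move=> yA; apply/eqP; rewrite eqn_leq; apply/andP; split.
  have := (dimv_add_leqif A <[y]>).1; rewrite dim_vline.
  by case: (y != 0); rewrite ?addn1 ?addn0 // => /leq_trans->.
rewrite ltnNge; apply: contra yA => le_dim.
have /eqP -> : A == (A + <[y]>)%VS by rewrite eqEdim addvSl.
exact: subvP (addvSr _ _) _ (memv_line y).
Qed.

Lemma extend_by_sublist (K : fieldType) (V : vectType K) (T : eqType)
    (f : T -> V) (A : {vspace V}) (L : seq T) :
  exists L', [/\ {subset L' <= L}, (A + <<map f L'>> = A + <<map f L>>)%VS &
    (\dim A + size L' = \dim (A + <<map f L>>))%N].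
Proof.
elim: L A => [|t L IH] A.
  by exists [::]; rewrite /= span_nil addv0 addn0.
have spanE B s : (B + <<map f (t :: s)>> = B + <[f t]> + <<map f s>>)%VS.
  by rewrite /= span_cons addvA.
have [ftA | ftA] := boolP (f t \in A).
  have [L' [sub e d]] := IH A.
  exists L'; rewrite spanE (addv_idPl ftA); split=> // u /sub uL.
  by rewrite inE uL orbT.
have [L' [sub e d]] := IH (A + <[f t]>)%VS.
exists (t :: L'); rewrite !spanE -d -e dim_add_line // addSnnS; split=> //.
by move=> u; rewrite !inE => /orP[->//|/sub ->]; rewrite orbT.
Qed.

Lemma span_coefs (K : fieldType) (V : vectType K) n (f : 'I_n -> V)
    (P : pred 'I_n) (v : V) :
  v \in <<[seq f j | j <- enum 'I_n & P j]>>%VS ->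
  exists c : 'I_n -> K, v = \sum_(j | P j) c j *: f j.
Proof.
rewrite span_def big_map big_filter big_enum_cond /=.
move/memv_sumP => [vs Hvs ->].
have /fin_all_exists [c Hc] : forall j, exists c : K, P j -> vs j = c *: f j.
  move=> j; case Pj: (P j); last by exists 0.
  by have /vlineP[c ->] := Hvs j Pj; exists c.
by exists c; apply: eq_bigr => j /Hc.
Qed.

Lemma free_filter (K : fieldType) (V : vectType K) (T : eqType) (f : T -> V)
    (P : pred T) (s : seq T) :
  free (map f s) -> free [seq f i | i <- s & P i].
Proof.
have /(perm_map f)/perm_free <- := permEl (perm_filterC P s).
by rewrite map_cat => /catl_free.
Qed.

Lemma map_nth_ord (T : Type) (x0 : T) (s : seq T) n :
  size s = n -> [seq nth x0 s i | i : 'I_n <- enum 'I_n] = s.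
Proof.
move=> <-; rewrite -[RHS](mkseq_nth x0) /mkseq -val_enum_ord -map_comp.
by apply: eq_map.
Qed.

Lemma count_ord_lt n d : (d <= n)%N ->
  count (fun i : 'I_n => (i < d)%N) (enum 'I_n) = d.
Proof.
move=> dn; rewrite -(count_map val (fun i => (i < d)%N)) val_enum_ord.
by rewrite -size_filter (filter_iota_ltn 0 dn) size_iota.
Qed.

Section Construction.

Variables (K : fieldType) (V : vectType K) (l : nat).
Variables (Vs : 'I_l -> {vspace V}) (F : nat -> {vspace V}).
Hypothesis sumVs : (\sum_(i < l) Vs i)%VS = fullv.

Local Notation n := (\dim (fullv : {vspace V})).
Local Notation d k := (\dim (F k)).

(* An item records a vector x of some component V(g), the vector b it is
   corrected to, the index g, and the level of the flag b is chosen in. *)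
Definition item := (V * V * 'I_l * nat)%type.
Definition ix (it : item) : V := it.1.1.1.
Definition ib (it : item) : V := it.1.1.2.
Definition ig (it : item) : 'I_l := it.1.2.
Definition ilev (it : item) : nat := it.2.

Definition xspan (s : seq item) (P : pred item) : {vspace V} :=
  <<[seq ix it | it <- s & P it]>>%VS.

Lemma xspan_sub (s s' : seq item) (P Q : pred item) :
  {subset s <= s'} -> {in s, subpred P Q} -> (xspan s P <= xspan s' Q)%VS.
Proof.
move=> ss' PQ; apply: sub_span => v /mapP [it]; rewrite mem_filter.
by case/andP=> Pit sit ->; rewrite map_f // mem_filter PQ ?ss'.
Qed.

(* The items built after treating the levels 0, ..., k-1 of the flag, sorted
   by decreasing level: their x-vectors form a basis of a complement of F k,
   the item at position p has a level lv with d (lv+1) <= p + d k < d lv, and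
   b - x is a combination of x-vectors of lower level in other components. *)
Record adapted (k : nat) (its : seq item) : Prop := Adapted {
  adapted_size : size its = (n - d k)%N;
  adapted_span : (<<map ix its>> + F k)%VS = fullv;
  adapted_pos : forall it0 p, (p < size its)%N ->
    [/\ (ilev (nth it0 its p) < k)%N, (d (ilev (nth it0 its p)).+1 <= p + d k)%N
      & (p + d k < d (ilev (nth it0 its p)))%N];
  adapted_item : forall it, it \in its ->
    [/\ ix it \in Vs (ig it), ib it \in F (ilev it) & (ilev it < k)%N];
  adapted_lower : forall it, it \in its ->
    ib it - ix it \in xspan its (fun it' => (ilev it' < ilev it)%N && (ig it' != ig it))
}.

Lemma adapted0 : F 0%N = fullv -> adapted 0 [::].
Proof. by move=> F0; split=> //=; rewrite F0 ?subnn // span_nil add0v. Qed.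

Section Step.

Variables (k : nat) (its : seq item).
Hypotheses (Fk1 : (F k.+1 <= F k)%VS) (its_adapted : adapted k its).

Let W := <<map ix its>>%VS.

Definition other_span (g : 'I_l) : {vspace V} := xspan its (fun it => ig it != g).

Definition candidates (g : 'I_l) : {vspace V} := ((F k + other_span g) :&: Vs g)%VS.

Lemma dim_items_span : \dim W = (n - d k)%N.
Proof.
have size_its := adapted_size its_adapted.
have span_its := adapted_span its_adapted.
apply/eqP; rewrite eqn_leq; apply/andP; split.
  by have := dim_span (map ix its); rewrite size_map size_its.
by have := (dimv_add_leqif W (F k)).1; rewrite span_its; lia.
Qed.

Lemma items_span_disjoint : (W :&: F k.+1 = 0)%VS.
Proof.
have span_its := adapted_span its_adapted.
have dFk : (d k <= n)%N by apply/dimvS/subvf.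
have capWF : (W :&: F k <= 0)%VS.
  by rewrite -(dimv_add_leqif W (F k)).2 span_its dim_items_span; apply/eqP; lia.
by apply/eqP; rewrite -subv0 (subv_trans _ capWF) // capvS.
Qed.

Lemma component_cover (g : 'I_l) :
  (Vs g <= xspan its (fun it => ig it == g) + candidates g)%VS.
Proof.
have span_its := adapted_span its_adapted.
have item_its := adapted_item its_adapted.
have Wg_Vs : (xspan its (fun it => ig it == g) <= Vs g)%VS.
  apply/span_subvP => v /mapP [it]; rewrite mem_filter => /andP [/eqP <- itin] ->.
  by case: (item_its it itin).
have W_split : (W <= xspan its (fun it => ig it == g) + other_span g)%VS.
  rewrite -span_cat; apply: sub_span => v /mapP [it itin ->].
  rewrite mem_cat; apply/orP; case: (boolP (ig it == g)) => gE; [left|right].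
    by rewrite map_f // mem_filter gE.
  by rewrite map_f // mem_filter gE.
apply/subvP => v vV.
have : v \in (W + F k)%VS by rewrite span_its memvf.
case/memv_addP => w /(subvP W_split) /memv_addP [w1 w1W [w2 w2W ->]] [f fF vE].
rewrite vE -addrA memv_add //; apply/memv_capP; split; first by rewrite addrC memv_add.
have -> : w2 + f = v - w1 by rewrite vE [w1 + w2]addrC addrAC addrK.
by rewrite memvB // (subvP Wg_Vs).
Qed.

Lemma cover_fullv : (fullv <= W + \sum_(g < l) candidates g)%VS.
Proof.
rewrite -sumVs; apply/subv_sumP => g _; apply: subv_trans (component_cover g) _.
apply: addvS; last exact: (sumv_sup g).
apply: sub_span => v /mapP [it]; rewrite mem_filter => /andP [_ itin] ->.
exact: map_f.
Qed.

Lemma adapted_extend (new : seq item) :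
  size new = (d k - d k.+1)%N ->
  (<<map ix new>> + W + F k.+1)%VS = fullv ->
  (forall it, it \in new -> [/\ ix it \in Vs (ig it), ib it \in F k, ilev it = k
                           & ib it - ix it \in other_span (ig it)]) ->
  adapted k.+1 (new ++ its).
Proof.
move=> size_new span_new item_new.
have size_its := adapted_size its_adapted.
have item_its := adapted_item its_adapted.
have dk1 : (d k.+1 <= d k)%N := dimvS Fk1.
have dkn : (d k <= n)%N := dimvS (subvf (F k)).
split.
- by rewrite size_cat size_new size_its; lia.
- by rewrite map_cat span_cat.
- move=> it0 p; rewrite size_cat nth_cat size_new => lt_p.
  case: ifP => p_new.
    have /item_new [_ _ -> _] : nth it0 new p \in new by rewrite mem_nth ?size_new.
    by split; lia.
  have lt_q : (p - (d k - d k.+1) < size its)%N by rewrite size_its; lia.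
  by case: (adapted_pos its_adapted it0 lt_q) => ? ? ?; split; lia.
- move=> it; rewrite mem_cat => /orP [/item_new [xV bF -> _] | itin].
    by split.
  by case: (item_its it itin) => xV bF lev_it; split=> //; lia.
- have sub_its : {subset its <= new ++ its}.
    by move=> it itin; rewrite mem_cat itin orbT.
  move=> it; rewrite mem_cat => /orP [itn | itin].
    have [_ _ lev_it lower_it] := item_new it itn.
    apply: subvP lower_it; apply: xspan_sub => // it' it'in /= ->.
    by rewrite lev_it andbT; case: (item_its it' it'in).
  by apply: subvP (adapted_lower its_adapted itin); apply: xspan_sub.
Qed.

(* The induction step: a basis of the candidates contains enough vectors to
   extend the old x-vectors and F (k+1) to V, and each chosen y in V(g) splits
   as y = b + w with b in F k and w in other_span g. *)
Lemma adapted_step : exists its', adapted k.+1 its'.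
Proof.
pose L := flatten [seq [seq (g, y) | y <- vbasis (candidates g)] | g <- enum 'I_l].
have L_cand p : p \in L -> p.2 \in candidates p.1.
  by case/flattenP=> _ /mapP [g _ ->] /mapP [y yb ->]; exact: vbasis_mem.
have cand_L : (\sum_(g < l) candidates g <= <<map snd L>>)%VS.
  apply/subv_sumP => g _; rewrite -(span_basis (vbasisP (candidates g))).
  apply: sub_span => y yb; apply/mapP; exists (g, y) => //; apply/flattenP.
  exists [seq (g, y) | y <- vbasis (candidates g)]; last exact: map_f.
  by apply: map_f; rewrite mem_enum.
have [L' [sub_L' span_L' dim_L']] := extend_by_sublist snd (W + F k.+1)%VS L.
have full_L : (W + F k.+1 + <<map snd L>> = fullv)%VS.
  apply/eqP; rewrite eqEsubv subvf (subv_trans cover_fullv) //= -addvA addvS //.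
  exact: subv_trans cand_L (addvSr _ _).
rewrite full_L in span_L' dim_L'.
pose mk (p : 'I_l * V) : item := (p.2, addv_pi1 (F k) (other_span p.1) p.2, p.1, k).
exists (map mk L' ++ its); apply: adapted_extend.
- have dk1 : (d k.+1 <= d k)%N := dimvS Fk1.
  have dkn : (d k <= n)%N := dimvS (subvf (F k)).
  move: dim_L'; rewrite size_map dimv_disjoint_sum ?items_span_disjoint //.
  (* naming size L' merges its two typings (as a seq over an eqType or a
     product type), which lia would treat as distinct atoms *)
  set s := size L'; rewrite dim_items_span; lia.
- have -> : map ix (map mk L') = map snd L' by rewrite -map_comp.
  by rewrite -addvA addvC.
- move=> _ /mapP [p pL' ->]; rewrite /ix /ib /ig /ilev /=.
  have /memv_capP [yFW yV] := L_cand p (sub_L' p pL').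
  split=> //; first exact: memv_pi1.
  by rewrite -[X in _ - X](addv_pi1_pi2 yFW) opprD addrA subrr add0r memvN memv_pi2.
Qed.

End Step.

Lemma adapted_exists (m : nat) :
  F 0%N = fullv -> (forall k, (k < m)%N -> (F k.+1 <= F k)%VS) ->
  forall k, (k <= m)%N -> exists its, adapted k its.
Proof.
move=> F0 HF; elim=> [|k IH] km; first by exists [::]; exact: adapted0.
have [its its_adapted] := IH (ltnW km).
exact: adapted_step (HF k km) its_adapted.
Qed.

End Construction.

Section TriangularBases.

Variables (K : fieldType) (V : vectType K) (l m : nat) (F : nat -> {vspace V}).
Hypothesis HF : forall k, (k < m)%N -> (F k.+1 <= F k)%VS.

Local Notation n := (\dim (fullv : {vspace V})).
Local Notation d k := (\dim (F k)).

Variables (x b : 'I_n -> V) (g : 'I_n -> 'I_l) (lev : 'I_n -> nat).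
Hypotheses (span_x : <<[seq x i | i <- enum 'I_n]>>%VS = fullv)
  (lev_lt : forall i, (lev i < m)%N)
  (lev_pos : forall i : 'I_n, (d (lev i).+1 <= i < d (lev i))%N)
  (b_in : forall i, b i \in F (lev i))
  (b_lower : forall i, b i - x i \in
     <<[seq x j | j <- enum 'I_n & (lev j < lev i)%N && (g j != g i)]>>%VS).

Local Notation bs := [seq b i | i <- enum 'I_n].

Lemma lt_dim_lev (i : 'I_n) k : (k <= m)%N -> (i < d k)%N = (k <= lev i)%N.
Proof.
move=> km; have /andP [lo hi] := lev_pos i.
apply/idP/idP => [lt_i | le_k].
  rewrite leqNgt; apply: contraTN lt_i => lt_lev; rewrite -leqNgt.
  exact: leq_trans (dimvS (flag_antitone HF lt_lev km)) lo.
exact: leq_trans hi (dimvS (flag_antitone HF le_k (ltnW (lev_lt i)))).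
Qed.

Lemma flag_level_lev (i : 'I_n) : flag_level F m i.+1 = lev i.
Proof.
apply/eqP; rewrite eqn_leq; apply/andP; split.
  by apply/bigmax_leqP => k /=; rewrite lt_dim_lev // -ltnS.
have lev_ord : (lev i < m.+1)%N by rewrite ltnS ltnW.
by apply: (leq_bigmax_cond (Ordinal lev_ord)); rewrite /= lt_dim_lev.
Qed.

Lemma lev_lt_index (i j : 'I_n) : (lev j < lev i)%N -> (i < j)%N.
Proof.
move=> lt_lev; have levm := ltnW (lev_lt i).
have i_lt : (i < d (lev i))%N by rewrite lt_dim_lev.
have j_ge : (d (lev i) <= j)%N by rewrite leqNgt lt_dim_lev // -ltnNge.
exact: leq_trans i_lt j_ge.
Qed.

Lemma basis_x : basis_of fullv [seq x i | i <- enum 'I_n].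
Proof. by rewrite basisEdim span_x subvv size_map size_enum_ord leqnn. Qed.

(* Unwinding b - x level by level, every x i is a combination of the b j. *)
Lemma x_in_span_b (i : 'I_n) : x i \in <<bs>>%VS.
Proof.
have [L] := ubnP (lev i); elim: L i => // L IH i lt_L.
have -> : x i = b i - (b i - x i) by rewrite opprB addrC subrK.
apply: memvB; first by rewrite memv_span ?map_f ?mem_enum.
apply: subv_trans (b_lower i) _; apply/span_subvP => v /mapP [j].
by rewrite mem_filter => /andP [/andP [lt_j _] _] ->; apply: IH; lia.
Qed.

Lemma basis_b : basis_of fullv bs.
Proof.
rewrite basisEdim size_map size_enum_ord leqnn andbT.
apply: (@subv_trans _ _ <<[seq x i | i <- enum 'I_n]>>%VS); first by rewrite span_x.
by apply/span_subvP => v /mapP [i _ ->]; exact: x_in_span_b.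
Qed.

(* The first d k vectors b i are free and of level at least k. *)
Lemma basis_flag k : (k < m)%N ->
  basis_of (F k) [seq b i | i : 'I_n <- enum 'I_n & (i < d k)%N].
Proof.
move=> km; rewrite basisEfree free_filter ?(basis_free basis_b) //=.
apply/andP; split.
  apply/span_subvP => v /mapP [i]; rewrite mem_filter => /andP [lt_i _] ->.
  have le_k : (k <= lev i)%N by rewrite -lt_dim_lev // ltnW.
  exact: subvP (flag_antitone HF le_k (ltnW (lev_lt i))) _ (b_in i).
by rewrite size_map size_filter count_ord_lt // dimvS ?subvf.
Qed.

Lemma unitriangular_coefs : exists S : 'M[K]_n,
  ((forall i j : 'I_n, (j < i)%N -> S i j = 0) /\ (forall i : 'I_n, S i i = 1)) /\
  (forall i : 'I_n,
     b i = x i + \sum_(j : 'I_n | (i < j)%N) S i j *: x j /\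
     b i = x i + \sum_(j : 'I_n | (flag_level F m j.+1 < flag_level F m i.+1)%N
                                  && (g j != g i)) S i j *: x j).
Proof.
have [C HC] := fin_all_exists (fun i => span_coefs (b_lower i)).
pose S := \matrix_(i, j) (if i == j then 1 else
            if (lev j < lev i)%N && (g j != g i) then C i j else 0 : K).
have S_off (i j : 'I_n) : i != j ->
    S i j = if (lev j < lev i)%N && (g j != g i) then C i j else 0.
  by rewrite mxE => /negbTE ->.
have lower_sum (i : 'I_n) : \sum_(j : 'I_n | (flag_level F m j.+1 < flag_level F m i.+1)%N
                              && (g j != g i)) S i j *: x j = b i - x i.
  rewrite HC; apply: eq_big => [j | j]; first by rewrite !flag_level_lev.
  case/andP; rewrite !flag_level_lev => lt_lev gj.
  by rewrite S_off ?lt_lev ?gj //; apply: contraTneq lt_lev => ->; rewrite ltnn.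
have upper_sum (i : 'I_n) : \sum_(j : 'I_n | (i < j)%N) S i j *: x j = b i - x i.
  rewrite HC big_mkcond [RHS]big_mkcond; apply: eq_bigr => j _.
  have [<- | ij] := eqVneq i j; first by rewrite !ltnn.
  rewrite S_off //; case c: ((lev j < lev i)%N && (g j != g i)).
    by move/andP: c => [/lev_lt_index -> _].
  by rewrite scale0r if_same.
exists S; split; [split | ] => [i j lt_ji | i | i].
- rewrite S_off; last by apply: contraTneq lt_ji => ->; rewrite ltnn.
  case: ifP => // /andP [/lev_lt_index lt_ij _].
  by have := ltn_trans lt_ij lt_ji; rewrite ltnn.
- by rewrite mxE eqxx.
- by rewrite upper_sum lower_sum addrC subrK.
Qed.

End TriangularBases.

Theorem mainTheorem16 (K : fieldType) (V : vectType K) (l m : nat)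
  (Vs : 'I_l -> {vspace V}) (F : nat -> {vspace V}) :
  (1 <= l)%N -> (1 <= m)%N ->
  (\sum_(i < l) Vs i)%VS = fullv -> directv (\sum_(i < l) Vs i) ->
  F 0%N = fullv -> F m = 0%VS -> (forall k, (k < m)%N -> (F k.+1 <= F k)%VS) ->
  let n := \dim (fullv : {vspace V}) in
  exists (x b : 'I_n -> V) (S : 'M[K]_n) (g : 'I_n -> 'I_l),
    [/\ basis_of fullv [seq x i | i <- enum 'I_n] /\
        basis_of fullv [seq b i | i <- enum 'I_n],
        (forall i j : 'I_n, (j < i)%N -> S i j = 0) /\ (forall i : 'I_n, S i i = 1),
        (forall i : 'I_n, x i \in Vs (g i)),
        (forall k, (k < m)%N ->
           basis_of (F k) [seq b i | i : 'I_n <- enum 'I_n & (i < \dim (F k))%N]) &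
        (forall i : 'I_n,
           b i = x i + \sum_(j : 'I_n | (i < j)%N) S i j *: x j /\
           b i = x i + \sum_(j : 'I_n | (flag_level F m j.+1 < flag_level F m i.+1)%N
                                        && (g j != g i)) S i j *: x j)].
Proof.
move=> l_gt0 _ sumVs _ F0 Fm HF n.
have [its its_adapted] := adapted_exists sumVs F0 HF (leqnn m).
have size_its : size its = n by rewrite (adapted_size its_adapted) Fm dimv0 subn0.
pose it0 : item V l := (0, 0, Ordinal l_gt0, 0%N).
pose item_at (i : 'I_n) := nth it0 its i.
have its_at : [seq item_at i | i <- enum 'I_n] = its := map_nth_ord it0 size_its.
have item_in (i : 'I_n) : item_at i \in its by rewrite mem_nth ?size_its.
pose x i := ix (item_at i); pose b i := ib (item_at i).
pose g i := ig (item_at i); pose lev i := ilev (item_at i).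
have span_x : <<[seq x i | i <- enum 'I_n]>>%VS = fullv.
  by have := adapted_span its_adapted; rewrite Fm addv0 -its_at -map_comp.
have item_at_in (i : 'I_n) := adapted_item its_adapted (item_in i).
have lev_lt (i : 'I_n) : (lev i < m)%N by case: (item_at_in i).
have b_in (i : 'I_n) : b i \in F (lev i) by case: (item_at_in i).
have lev_pos (i : 'I_n) : (\dim (F (lev i).+1) <= i < \dim (F (lev i)))%N.
  have := adapted_pos its_adapted it0 (_ : (i < size its)%N).
  by rewrite Fm dimv0 !addn0 size_its => /(_ (ltn_ord i)) [_ -> ->].
have b_lower (i : 'I_n) : b i - x i \in
    <<[seq x j | j <- enum 'I_n & (lev j < lev i)%N && (g j != g i)]>>%VS.
  have := adapted_lower its_adapted (item_in i).
  by rewrite /xspan -its_at filter_map -map_comp.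
have [S [S_tri S_expand]] := unitriangular_coefs HF lev_lt lev_pos b_lower.
exists x, b, S, g; split=> //.
- by split; [exact: basis_x span_x | exact: basis_b span_x b_lower].
- by move=> i; case: (item_at_in i).
- exact: (basis_flag HF span_x lev_lt lev_pos b_in b_lower).
Qed.
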